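(* Let $G$ be a finitely generated group, $U$ a finite symmetric generating set of $G$, and $H\leqslant G$ with $[G:H]=d$. Suppose there exist $\alpha,\beta>0$ such that every finite symmetric generating set $V$ of $H$ satisfies $|V^n|\geqslant(\alpha|V|)^{\beta n}$ for every $n\in\mathbb{N}$. Let $m=2d!+1$. Then $$|U^n|\geqslant\bigg(\frac{\alpha}{2^{m/\beta}d}|U|\bigg)^{\frac{\beta n}{m}}$$ for every $n\in\mathbb{N}$.
   Context: $U^n=\{u_1\cdots u_n:u_i\in U\}$; symmetric means $U=U^{-1}$. *)

From Stdlib Require Import Reals List Arith.
Import ListNotations.
Open Scope R_scope.

Section Grp.
Context {G : Type} (mul : G -> G -> G) (one : G) (inv : G -> G).

Definition is_group : Prop :=
  (forall x y z, mul x (mul y z) = mul (mul x y) z) /\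
  (forall x, mul one x = x) /\ (forall x, mul x one = x) /\
  (forall x, mul (inv x) x = one) /\ (forall x, mul x (inv x) = one).

Definition prod_list (l : list G) : G := fold_right mul one l.

Definition set_pow (U : G -> Prop) (n : nat) : G -> Prop :=
  fun x => exists l : list G, length l = n /\ Forall U l /\ prod_list l = x.

Definition symmetric (U : G -> Prop) : Prop := forall x, U x <-> U (inv x).

Definition is_subgroup (H : G -> Prop) : Prop :=
  H one /\ (forall x y, H x -> H y -> H (mul x y)) /\ (forall x, H x -> H (inv x)).

Definition generates (U S : G -> Prop) : Prop :=
  (forall x, U x -> S x) /\
  (forall x, S x -> exists l : list G,
       Forall (fun y => U y \/ U (inv y)) l /\ prod_list l = x).

(* [G : H] = d : there are exactly d left cosets g H *)
Definition has_index (H : G -> Prop) (d : nat) : Prop :=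
  exists l : list G, length l = d /\
    (forall x, exists g, In g l /\ H (mul (inv g) x)) /\
    (forall i j, (i < d)%nat -> (j < d)%nat ->
        H (mul (inv (nth i l one)) (nth j l one)) -> i = j).

End Grp.

Definition has_card {G : Type} (A : G -> Prop) (k : nat) : Prop :=
  exists l : list G, NoDup l /\ length l = k /\ (forall x, A x <-> In x l).

(* real power x^y for x >= 0 with the convention 0^0 = 1, 0^y = 0 (y <> 0) *)
Definition rpow (x y : R) : R :=
  if Req_EM_T x 0 then (if Req_EM_T y 0 then 1 else 0) else Rpower x y.

(* Let d be the index of H and B_N the ball of radius N of the word metric of U.
   Every coset of H has a representative in B_(d-1): among the d+1 suffixes of a
   longer word two lie in the same coset, and the segment between them can be cut
   out. By Schreier's argument V = H ∩ B_(2d) is then a finite symmetric generating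
   set of H. Each coset meets U in at most |V| elements, so |U| <= d |V|; and since
   U is symmetric, V^n ⊆ B_(2dn) ⊆ U^(2dn) ∪ U^(2dn-1), so |V^n| <= 2 |U^n|^(2d).
   Feeding this into (alpha |V|)^(beta n) <= |V^n| and taking m-th roots, m >= 2d,
   gives the bound. *)

From Stdlib Require Import Reals List Arith Lia Lra Classical Permutation.
Import ListNotations.
Local Open Scope nat_scope.

Section FiniteCardinals.
Context {T : Type}.
Implicit Types (A B C : T -> Prop) (a b c : nat).

Lemma card_le_length A a l : has_card A a -> (forall x, A x -> In x l) -> a <= length l.
Proof.
  intros [la [nd [<- hA]]] cover.
  apply NoDup_incl_length; [exact nd|]. intros x hx. apply cover, hA, hx.
Qed.

Lemma length_le_card A a l : has_card A a -> NoDup l -> (forall x, In x l -> A x) -> length l <= a.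
Proof.
  intros [la [_ [<- hA]]] nd inA.
  apply NoDup_incl_length; [exact nd|]. intros x hx. apply hA, inA, hx.
Qed.

Lemma card_le_of_injective A B (f : T -> T) a b :
  has_card A a -> has_card B b ->
  (forall x y, A x -> A y -> f x = f y -> x = y) -> (forall x, A x -> B (f x)) -> a <= b.
Proof.
  intros hA hB inj maps. pose proof hA as [la [nd [<- hla]]].
  rewrite <- (length_map f la). apply (length_le_card B); [exact hB| |].
  - apply NoDup_map_NoDup_ForallPairs; [|exact nd].
    intros x y hx hy. apply inj; apply hla; assumption.
  - intros y hy. apply in_map_iff in hy as [x [<- hx]]. apply maps, hla, hx.
Qed.

Lemma card_le_of_subset A B a b : has_card A a -> has_card B b -> (forall x, A x -> B x) -> a <= b.
Proof. intros hA hB sub. apply (card_le_of_injective A B (fun x => x)); auto. Qed.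

Lemma has_card_unique A a b : has_card A a -> has_card A b -> a = b.
Proof. intros ha hb. apply Nat.le_antisymm; eapply card_le_of_subset; eauto. Qed.

Lemma has_card_of_cover A l : (forall x, A x -> In x l) -> exists a, has_card A a.
Proof.
  revert A; induction l as [|y l IH]; intros A cover.
  - exists 0, []. split; [constructor|split; [reflexivity|]].
    intro x; split; [apply cover|intros []].
  - destruct (IH (fun x => A x /\ x <> y)) as [a [la [nd [len hla]]]].
    { intros x [hx ne]. destruct (cover x hx); [congruence|assumption]. }
    destruct (classic (A y)) as [hy|hy].
    + exists (S a), (y :: la). split; [|split; [simpl; congruence|]].
      * constructor; [|exact nd]. intro hin. apply hla in hin. tauto.
      * intro x. destruct (classic (x = y)) as [->|ne]; simpl; [tauto|].
        rewrite <- hla. intuition congruence.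
    + exists a, la. split; [exact nd|split; [exact len|]].
      intro x. rewrite <- hla. intuition congruence.
Qed.

Lemma has_card_of_subset A B b : has_card B b -> (forall x, A x -> B x) -> exists a, has_card A a.
Proof.
  intros [lb [_ [_ hB]]] sub. apply (has_card_of_cover A lb). intros x hx. apply hB, sub, hx.
Qed.

Lemma card_le_add A B C a b c :
  has_card A a -> has_card B b -> has_card C c -> (forall x, A x -> B x \/ C x) -> a <= b + c.
Proof.
  intros hA [lb [_ [<- hB]]] [lc [_ [<- hC]]] cover.
  rewrite <- length_app. apply (card_le_length A); [exact hA|].
  intros x hx. apply in_or_app. destruct (cover x hx); [left; apply hB|right; apply hC]; assumption.
Qed.

Lemma card_le_length_mul {T1 T2} (f : T1 -> T2 -> T) A (C : T2 -> Prop) a c l :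
  has_card A a -> has_card C c ->
  (forall z, A z -> exists x y, In x l /\ C y /\ z = f x y) -> a <= length l * c.
Proof.
  intros hA [lc [_ [<- hC]]] cover.
  rewrite <- length_prod, <- (length_map (fun p => f (fst p) (snd p))).
  apply (card_le_length A); [exact hA|]. intros z hz.
  destruct (cover z hz) as [x [y [hx [hy ->]]]].
  apply in_map_iff. exists (x, y). split; [reflexivity|]. apply in_prod; [exact hx|apply hC, hy].
Qed.

Lemma card_le_mul {T1 T2} (f : T1 -> T2 -> T) A (B : T1 -> Prop) (C : T2 -> Prop) a b c :
  has_card A a -> has_card B b -> has_card C c ->
  (forall z, A z -> exists x y, B x /\ C y /\ z = f x y) -> a <= b * c.
Proof.
  intros hA [lb [_ [<- hB]]] hC cover. apply (card_le_length_mul f A C); [exact hA|exact hC|].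
  intros z hz. destruct (cover z hz) as [x [y [hx [hy ->]]]]. exists x, y. rewrite <- hB. auto.
Qed.

End FiniteCardinals.

Lemma finite_choice {A B} (P : A -> B -> Prop) (l : list A) :
  exists l', length l' <= length l /\
    forall x, In x l -> (exists y, P x y) -> exists y, In y l' /\ P x y.
Proof.
  induction l as [|x l [l' [len IH]]].
  - exists []. split; [reflexivity|]. intros x [].
  - destruct (classic (exists y, P x y)) as [[y hy]|none].
    + exists (y :: l'). split; [simpl; lia|]. intros z [<-|hz] hPz.
      * exists y. split; [left; reflexivity|exact hy].
      * destruct (IH z hz hPz) as [w [hw hPw]]. exists w. split; [right|]; assumption.
    + exists l'. split; [simpl; lia|]. intros z [<-|hz] hPz; [contradiction|]. exact (IH z hz hPz).
Qed.

Section Group.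
Context {G : Type} (mul : G -> G -> G) (one : G) (inv : G -> G).
Hypothesis Hgrp : is_group mul one inv.

Local Notation prod := (prod_list mul one).
Local Notation power := (set_pow mul one).

Lemma mulgA x y z : mul x (mul y z) = mul (mul x y) z.
Proof. apply Hgrp. Qed.
Lemma mul1g x : mul one x = x.
Proof. apply Hgrp. Qed.
Lemma mulg1 x : mul x one = x.
Proof. apply Hgrp. Qed.
Lemma mulVg x : mul (inv x) x = one.
Proof. apply Hgrp. Qed.
Lemma mulgV x : mul x (inv x) = one.
Proof. apply Hgrp. Qed.

Lemma mulKg x y : mul (inv x) (mul x y) = y.
Proof. rewrite mulgA, mulVg, mul1g. reflexivity. Qed.
Lemma mulKVg x y : mul x (mul (inv x) y) = y.
Proof. rewrite mulgA, mulgV, mul1g. reflexivity. Qed.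

Lemma invg_of_mul_eq1 x y : mul x y = one -> inv x = y.
Proof. intro e. rewrite <- (mulKg x y), e, mulg1. reflexivity. Qed.
Lemma invgK x : inv (inv x) = x.
Proof. apply invg_of_mul_eq1, mulVg. Qed.
Lemma invg1 : inv one = one.
Proof. apply invg_of_mul_eq1, mul1g. Qed.
Lemma invMg x y : inv (mul x y) = mul (inv y) (inv x).
Proof.
  apply invg_of_mul_eq1. rewrite <- mulgA, (mulgA y), mulgV, mul1g, mulgV. reflexivity.
Qed.

Lemma mulIg u x y : mul x u = mul y u -> x = y.
Proof. intro e. rewrite <- (mulg1 x), <- (mulg1 y), <- (mulgV u), !mulgA, e. reflexivity. Qed.

Lemma prod_app l1 l2 : prod (l1 ++ l2) = mul (prod l1) (prod l2).
Proof. induction l1 as [|x l1 IH]; simpl; [rewrite mul1g|rewrite IH, mulgA]; reflexivity. Qed.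

Lemma prod_inv l : inv (prod l) = prod (rev (map inv l)).
Proof.
  induction l as [|x l IH]; simpl; [exact invg1|].
  rewrite prod_app, invMg, IH. simpl. rewrite mulg1. reflexivity.
Qed.

Lemma set_pow0 U x : power U 0 x <-> x = one.
Proof.
  split.
  - intros [[|y l] [len [_ <-]]]; [reflexivity|discriminate].
  - intros ->. exists []. auto.
Qed.

Lemma set_pow1 U x : power U 1 x <-> U x.
Proof.
  split.
  - intros [[|y [|z l]] [len [hl <-]]]; try discriminate.
    inversion hl. simpl. rewrite mulg1. assumption.
  - intro hx. exists [x]. simpl. rewrite mulg1. auto.
Qed.

Lemma set_pow_add U a b x y : power U a x -> power U b y -> power U (a + b) (mul x y).
Proof.
  intros [l1 [<- [h1 <-]]] [l2 [<- [h2 <-]]]. exists (l1 ++ l2).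
  rewrite length_app, prod_app, Forall_app. auto.
Qed.

Lemma set_pow_addP U a b z :
  power U (a + b) z -> exists x y, power U a x /\ power U b y /\ z = mul x y.
Proof.
  intros [l [len [hl <-]]]. rewrite <- (firstn_skipn a l) in hl |- *.
  apply Forall_app in hl as [h1 h2].
  exists (prod (firstn a l)), (prod (skipn a l)). split; [|split].
  - exists (firstn a l). rewrite length_firstn. repeat split; auto; lia.
  - exists (skipn a l). rewrite length_skipn. repeat split; auto; lia.
  - apply prod_app.
Qed.

Lemma set_pow_inv U n x : symmetric inv U -> power U n x -> power U n (inv x).
Proof.
  intros Usym [l [<- [hl <-]]]. exists (rev (map inv l)).
  rewrite length_rev, length_map, prod_inv. repeat split.
  apply Forall_rev, Forall_map. eapply Forall_impl; [|exact hl].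
  intros y hy. apply Usym. rewrite invgK. exact hy.
Qed.

Lemma set_pow_SS U u n x : symmetric inv U -> U u -> power U n x -> power U (S (S n)) x.
Proof.
  intros Usym hu hx. rewrite <- (mulKVg u x).
  apply (set_pow_add U 1 (S n)); [apply set_pow1, hu|].
  apply (set_pow_add U 1 n); [|exact hx].
  apply set_pow1, Usym. rewrite invgK. exact hu.
Qed.

Lemma set_pow_cover U lU :
  (forall x, U x -> In x lU) -> forall n, exists l, forall x, power U n x -> In x l.
Proof.
  intros cover n. induction n as [|n [l IH]].
  - exists [one]. intros x hx. apply set_pow0 in hx as ->. left. reflexivity.
  - exists (map (fun p => mul (fst p) (snd p)) (list_prod lU l)). intros z hz.
    apply (set_pow_addP U 1 n) in hz as [u [y [hu [hy ->]]]]. rewrite set_pow1 in hu.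
    apply in_map_iff. exists (u, y). split; [reflexivity|].
    apply in_prod; [apply cover|apply IH]; assumption.
Qed.

Lemma has_card_set_pow U :
  (exists a, has_card U a) -> forall n, exists b, has_card (power U n) b.
Proof.
  intros [a [lU [_ [_ hU]]]] n. destruct (set_pow_cover U lU (fun x => proj1 (hU x)) n) as [l hl].
  exact (has_card_of_cover _ l hl).
Qed.

Lemma card_set_pow0 U : has_card (power U 0) 1.
Proof.
  exists [one]. split; [repeat constructor; intros []|split; [reflexivity|]].
  intro x. rewrite set_pow0. simpl. intuition.
Qed.

Lemma card_set_pow_add_le U p q a b c :
  has_card (power U p) a -> has_card (power U q) b -> has_card (power U (p + q)) c -> c <= a * b.
Proof.
  intros ha hb hc. apply (card_le_mul mul _ _ _ _ _ _ hc ha hb).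
  intros z hz. exact (set_pow_addP U p q z hz).
Qed.

Lemma card_set_pow_mul_le U n k :
  (exists a, has_card U a) -> has_card (power U n) k ->
  forall t c, has_card (power U (t * n)) c -> c <= k ^ t.
Proof.
  intros Ufin hk t. induction t as [|t IH]; intros c hc; simpl in *.
  - rewrite (has_card_unique _ _ _ hc (card_set_pow0 U)). reflexivity.
  - destruct (has_card_set_pow U Ufin (t * n)) as [c' hc'].
    pose proof (card_set_pow_add_le U _ _ _ _ _ hk hc' hc).
    specialize (IH c' hc'). nia.
Qed.

Lemma card_set_pow_mono U u i j a b :
  U u -> i <= j -> has_card (power U i) a -> has_card (power U j) b -> a <= b.
Proof.
  intros hu hij ha hb. destruct (Nat.le_exists_sub i j hij) as [t [-> _]].
  apply (card_le_of_injective _ _ (fun x => mul x (prod (repeat u t))) _ _ ha hb).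
  - intros x y _ _. apply mulIg.
  - intros x hx. rewrite Nat.add_comm. apply set_pow_add; [exact hx|].
    exists (repeat u t). rewrite repeat_length. repeat split.
    apply Forall_forall. intros y hy. apply repeat_spec in hy as ->. exact hu.
Qed.

Definition ball U N x := exists j, j <= N /\ power U j x.

Lemma ball_mul U a b x y : ball U a x -> ball U b y -> ball U (a + b) (mul x y).
Proof.
  intros [i [hi hx]] [j [hj hy]]. exists (i + j). split; [lia|]. apply set_pow_add; assumption.
Qed.

Lemma ball_inv U N x : symmetric inv U -> ball U N x -> ball U N (inv x).
Proof. intros Usym [j [hj hx]]. exists j. split; [exact hj|]. apply set_pow_inv; assumption. Qed.

Lemma ball_le U M N x : M <= N -> ball U M x -> ball U N x.
Proof. intros hMN [j [hj hx]]. exists j. split; [lia|exact hx]. Qed.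

Lemma ball_of_set_pow U j N x : j <= N -> power U j x -> ball U N x.
Proof. intros hj hx. exists j. auto. Qed.

Lemma has_card_ball U N : (exists a, has_card U a) -> exists b, has_card (ball U N) b.
Proof.
  intros [a [lU [_ [_ hU]]]]. pose proof (fun x => proj1 (hU x)) as cover.
  enough (exists l, forall x, ball U N x -> In x l) as [l hl] by exact (has_card_of_cover _ l hl).
  induction N as [|N [l IH]].
  - destruct (set_pow_cover U lU cover 0) as [l hl].
    exists l. intros x [j [hj hx]]. replace j with 0 in hx by lia. apply hl, hx.
  - destruct (set_pow_cover U lU cover (S N)) as [l' hl'].
    exists (l ++ l'). intros x [j [hj hx]]. apply in_or_app.
    destruct (Nat.eq_dec j (S N)) as [->|ne]; [right; apply hl', hx|].
    left. apply IH. exists j. split; [lia|exact hx].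
Qed.

Lemma set_pow_ball V U N n x :
  (forall y, V y -> ball U N y) -> power V n x -> ball U (n * N) x.
Proof.
  intros VN. revert x. induction n as [|n IH]; intros x hx.
  - apply (ball_of_set_pow U 0); [lia|]. apply set_pow0. apply set_pow0 in hx. exact hx.
  - apply (set_pow_addP V 1 n) in hx as [y [z [hy [hz ->]]]]. rewrite set_pow1 in hy.
    apply ball_mul; [apply VN, hy|apply IH, hz].
Qed.

Section SymmetricBall.
Variables (U : G -> Prop) (u : G).
Hypotheses (Usym : symmetric inv U) (hu : U u).

Lemma set_pow_add_double j t x : power U j x -> power U (j + 2 * t) x.
Proof.
  intro hx. induction t as [|t IH]; [rewrite Nat.add_0_r; exact hx|].
  replace (j + 2 * S t) with (S (S (j + 2 * t))) by lia. exact (set_pow_SS U u _ _ Usym hu IH).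
Qed.

Lemma ball_set_pow M x : ball U M x -> power U M x \/ power U (M - 1) x.
Proof.
  intros [j [hj hx]]. destruct (Nat.Even_or_Odd (M - j)) as [[t ht]|[t ht]].
  - left. replace M with (j + 2 * t) by lia. apply set_pow_add_double, hx.
  - right. replace (M - 1) with (j + 2 * t) by lia. apply set_pow_add_double, hx.
Qed.

Lemma card_le_of_subset_ball A M a b :
  (exists c, has_card U c) -> has_card A a -> (forall x, A x -> ball U M x) ->
  has_card (power U M) b -> a <= 2 * b.
Proof.
  intros Ufin hA AM hb. destruct (has_card_set_pow U Ufin (M - 1)) as [c hc].
  pose proof (card_le_add _ _ _ _ _ _ hA hb hc (fun x hx => ball_set_pow M x (AM x hx))).
  pose proof (card_set_pow_mono U u (M - 1) M c b hu ltac:(lia) hc hb). lia.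
Qed.

End SymmetricBall.

Section Cosets.
Variables (U H : G -> Prop) (lg : list G).
Hypotheses (Usym : symmetric inv U) (Ugen : generates mul one inv U (fun _ => True)).
Hypothesis Hsub : is_subgroup mul one inv H.
Hypothesis lg_cov : forall x, exists g, In g lg /\ H (mul (inv g) x).

Lemma subgroup1 : H one.
Proof. apply Hsub. Qed.
Lemma subgroupM x y : H x -> H y -> H (mul x y).
Proof. apply Hsub. Qed.
Lemma subgroupV x : H x -> H (inv x).
Proof. apply Hsub. Qed.

Lemma coset_sym x y : H (mul (inv x) y) -> H (mul (inv y) x).
Proof. intro h. apply subgroupV in h. rewrite invMg, invgK in h. exact h. Qed.

Lemma coset_trans x y z : H (mul (inv x) y) -> H (mul (inv y) z) -> H (mul (inv x) z).
Proof. intros hxy hyz. rewrite <- (mulKVg y z), mulgA. apply subgroupM; assumption. Qed.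

Lemma coset_inv_mul g x y : H (mul (inv g) x) -> H (mul (inv g) y) -> H (mul (inv x) y).
Proof. intros hx hy. apply (coset_trans _ g); [apply coset_sym|]; assumption. Qed.

Lemma index_pos : 0 < length lg.
Proof. destruct (lg_cov one) as [g [hg _]]. destruct lg; [contradiction|simpl; lia]. Qed.

Lemma exists_same_coset (c : nat -> G) :
  exists a b, a < b <= length lg /\ H (mul (inv (c a)) (c b)).
Proof.
  set (idx := seq 0 (S (length lg))).
  destruct (Permutation_pigeonhole_rel (fun i g => H (mul (inv g) (c i))) (l1 := idx) (l2 := lg))
    as [i [j [l [perm [g [_ [hi hj]]]]]]].
  - apply Forall_forall. intros i _. destruct (lg_cov (c i)) as [g hg]. apply Exists_exists. eauto.
  - unfold idx. rewrite length_seq. lia.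
  - assert (in_idx : forall k, In k (i :: j :: l) -> k <= length lg).
    { intros k hk. apply (Permutation_in _ (Permutation_sym perm)), in_seq in hk. lia. }
    pose proof (Permutation_NoDup perm (seq_NoDup _ _)) as nd.
    apply NoDup_cons_iff in nd as [nij _].
    assert (ij : i <> j) by (intros ->; apply nij; left; reflexivity).
    pose proof (in_idx i (or_introl eq_refl)).
    pose proof (in_idx j (or_intror (or_introl eq_refl))).
    destruct (Nat.lt_gt_cases i j) as [[lt|lt] _]; [exact ij| |].
    + exists i, j. split; [lia|]. apply (coset_inv_mul g); assumption.
    + exists j, i. split; [lia|]. apply (coset_inv_mul g); assumption.
Qed.

Lemma invg_mul_cancel p x y : mul (inv (mul p x)) (mul p y) = mul (inv x) y.
Proof. rewrite invMg, <- mulgA, mulKg. reflexivity. Qed.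

(* Among the first [length lg + 1] suffixes of a longer word two lie in the same coset;
   cutting out the segment between them keeps the coset of the whole word. *)
Lemma short_word_in_coset l :
  Forall U l -> exists l', Forall U l' /\ length l' < length lg /\ H (mul (inv (prod l')) (prod l)).
Proof.
  remember (length l) as n eqn:hn. revert l hn.
  induction n as [n IH] using lt_wf_ind. intros l hn hl.
  destruct (Nat.lt_ge_cases n (length lg)) as [short|long].
  { exists l. rewrite mulVg. split; [|split]; [exact hl|lia|exact subgroup1]. }
  destruct (exists_same_coset (fun i => prod (skipn i l))) as [a [b [hab hH]]]. simpl in hH.
  set (l' := firstn a l ++ skipn b l).
  assert (hl' : Forall U l').
  { assert (hpre : Forall U (firstn a l))
      by (rewrite <- (firstn_skipn a l), Forall_app in hl; tauto).
    assert (hsuf : Forall U (skipn b l))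
      by (rewrite <- (firstn_skipn b l), Forall_app in hl; tauto).
    apply Forall_app. split; assumption. }
  assert (len' : length l' < n)
    by (unfold l'; rewrite length_app, length_firstn, length_skipn; lia).
  destruct (IH _ len' l' eq_refl hl') as [l'' [hl'' [len'' hH'']]].
  exists l''. split; [exact hl''|split; [exact len''|]].
  apply (coset_trans _ (prod l')); [exact hH''|].
  rewrite <- (firstn_skipn a l). unfold l'. rewrite !prod_app, invg_mul_cancel.
  apply coset_sym, hH.
Qed.

Lemma word_of_generates x : exists l, Forall U l /\ prod l = x.
Proof.
  destruct (proj2 Ugen x I) as [l [hl <-]]. exists l. split; [|reflexivity].
  eapply Forall_impl; [|exact hl]. intros y [hy|hy]; [exact hy|]. apply Usym, hy.
Qed.

Lemma coset_rep_in_ball x : exists w, ball U (length lg - 1) w /\ H (mul (inv w) x).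
Proof.
  destruct (word_of_generates x) as [l [hl <-]].
  destruct (short_word_in_coset l hl) as [l' [hl' [len' hH]]].
  exists (prod l'). split; [|exact hH].
  apply (ball_of_set_pow U (length l')); [lia|]. exists l'. auto.
Qed.

Definition subgroup_ball N x := H x /\ ball U N x.

Lemma subgroup_ball_symmetric N : symmetric inv (subgroup_ball N).
Proof.
  assert (inv_closed : forall x, subgroup_ball N x -> subgroup_ball N (inv x)).
  { intros x [hH hB]. split; [apply subgroupV, hH|apply ball_inv; assumption]. }
  intro x. split; [apply inv_closed|]. intro hx. rewrite <- (invgK x). apply inv_closed, hx.
Qed.

Section Schreier.
Variable N : nat.
Hypothesis radius : 2 * length lg - 1 <= N.

(* The Schreier generators [R^-1 u R'], with coset representatives [R], [R'] in the ball
   of radius [length lg - 1], lie in [H] and in the ball of radius [2 * length lg - 1]. *)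
Lemma schreier_factorization l :
  Forall U l -> forall R, ball U (length lg - 1) R -> H (mul (inv R) (prod l)) ->
  exists ws, Forall (subgroup_ball N) ws /\ prod ws = mul (inv R) (prod l).
Proof.
  pose proof index_pos.
  induction l as [|u l IH]; intros hl R hR hH; simpl in hH |- *.
  - exists [inv R]. split; [|reflexivity]. constructor; [|constructor]. split.
    + rewrite mulg1 in hH. exact hH.
    + apply (ball_le _ (length lg - 1)); [lia|]. apply ball_inv; assumption.
  - inversion hl as [|? ? hu hl']. subst.
    destruct (coset_rep_in_ball (prod l)) as [R' [hR' hH']].
    destruct (IH hl' R' hR' hH') as [ws [hws prod_ws]].
    exists (mul (mul (inv R) u) R' :: ws). split.
    + constructor; [|exact hws]. split.
      * replace (mul (mul (inv R) u) R')
          with (mul (mul (inv R) (mul u (prod l))) (inv (mul (inv R') (prod l))))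
          by (rewrite invMg, invgK, <- !mulgA, mulKVg; reflexivity).
        apply subgroupM; [exact hH|apply subgroupV, hH'].
      * apply (ball_le _ (length lg - 1 + 1 + (length lg - 1))); [lia|].
        apply ball_mul; [apply ball_mul; [apply ball_inv; assumption|]|exact hR'].
        apply (ball_of_set_pow _ 1); [lia|apply set_pow1, hu].
    + simpl. rewrite prod_ws, <- !mulgA, mulKVg. reflexivity.
Qed.

Lemma subgroup_ball_generates : generates mul one inv (subgroup_ball N) H.
Proof.
  split; [intros x [hx _]; exact hx|]. intros x hx.
  destruct (word_of_generates x) as [l [hl <-]].
  assert (one_in_ball : ball U (length lg - 1) one)
    by (apply (ball_of_set_pow _ 0); [lia|apply set_pow0; reflexivity]).
  assert (hx' : H (mul (inv one) (prod l))) by (rewrite invg1, mul1g; exact hx).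
  destruct (schreier_factorization l hl one one_in_ball hx') as [ws [hws prod_ws]].
  exists ws. rewrite prod_ws, invg1, mul1g. split; [|reflexivity].
  eapply Forall_impl; [|exact hws]. intros y hy. left. exact hy.
Qed.

End Schreier.

(* Each coset meeting [U] contributes at most [|H ∩ B_N|] elements of [U]:
   fixing one [r] in it, every other [x] is [r (r^-1 x)] with [r^-1 x ∈ H ∩ B_2]. *)
Lemma card_le_index_mul_card_subgroup_ball N a b :
  2 <= N -> has_card U a -> has_card (subgroup_ball N) b -> a <= length lg * b.
Proof.
  intros hN hU hV.
  destruct (finite_choice (fun g r => U r /\ H (mul (inv g) r)) lg) as [reps [len hreps]].
  apply (Nat.le_trans _ (length reps * b)); [|apply Nat.mul_le_mono_r, len].
  apply (card_le_length_mul mul U _ _ _ _ hU hV). intros x hx.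
  destruct (lg_cov x) as [g [hg hgx]].
  destruct (hreps g hg (ex_intro _ x (conj hx hgx))) as [r [hr [hrU hgr]]].
  exists r, (mul (inv r) x). split; [exact hr|split; [split|symmetry; apply mulKVg]].
  - apply (coset_inv_mul g); assumption.
  - apply (ball_le _ 2); [exact hN|]. apply (ball_mul _ 1 1).
    + apply ball_inv; [exact Usym|]. apply (ball_of_set_pow _ 1); [lia|apply set_pow1, hrU].
    + apply (ball_of_set_pow _ 1); [lia|apply set_pow1, hx].
Qed.

Lemma card_set_pow_subgroup_ball_le u N n k c :
  (exists a, has_card U a) -> U u -> has_card (power U n) k ->
  has_card (power (subgroup_ball N) n) c -> c <= 2 * k ^ N.
Proof.
  intros Ufin hu hk hc. destruct (has_card_set_pow U Ufin (N * n)) as [e he].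
  assert (c <= 2 * e).
  { apply (card_le_of_subset_ball U u Usym hu _ (n * N) _ _ Ufin hc).
    - intros x hx. apply (set_pow_ball (subgroup_ball N)); [|exact hx]. intros y [_ hy]. exact hy.
    - rewrite Nat.mul_comm. exact he. }
  pose proof (card_set_pow_mul_le U n k Ufin hk N e he). lia.
Qed.

Lemma subgroup_ball_card_bounds u kU :
  U u -> has_card U kU ->
  exists kV, has_card (subgroup_ball (2 * length lg)) kV /\ kU <= length lg * kV /\
    forall n k, has_card (power U n) k ->
      exists kVn, has_card (power (subgroup_ball (2 * length lg)) n) kVn /\
        kVn <= 2 * k ^ (2 * length lg).
Proof.
  intros hu hkU. pose proof (ex_intro _ kU hkU) as Ufin. pose proof index_pos.
  destruct (has_card_ball U (2 * length lg) Ufin) as [kB hkB].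
  destruct (has_card_of_subset (subgroup_ball (2 * length lg)) _ _ hkB (fun x hx => proj2 hx))
    as [kV hkV].
  exists kV. split; [exact hkV|split].
  - exact (card_le_index_mul_card_subgroup_ball (2 * length lg) _ _ ltac:(lia) hkU hkV).
  - intros n k hk. destruct (has_card_set_pow _ (ex_intro _ kV hkV) n) as [kVn hkVn].
    exists kVn. split; [exact hkVn|].
    exact (card_set_pow_subgroup_ball_le u _ _ _ _ Ufin hu hk hkVn).
Qed.

End Cosets.

End Group.

Local Open Scope R_scope.

Lemma rpow_Rpower x y : 0 < x -> rpow x y = Rpower x y.
Proof. intro hx. unfold rpow. destruct (Req_EM_T x 0); [lra|reflexivity]. Qed.

Lemma rpow_0_l y : y <> 0 -> rpow 0 y = 0.
Proof.
  intro hy. unfold rpow. destruct (Req_EM_T 0 0); [|lra].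
  destruct (Req_EM_T y 0); [contradiction|reflexivity].
Qed.

Lemma rpow_0_r x : rpow x 0 = 1.
Proof.
  unfold rpow. destruct (Req_EM_T x 0); destruct (Req_EM_T 0 0); try lra.
  unfold Rpower. rewrite Rmult_0_l. exact exp_0.
Qed.

Lemma ln_le x y : 0 < x -> x <= y -> ln x <= ln y.
Proof. intros hx [lt| ->]; [left; apply ln_increasing|right]; auto. Qed.

Lemma exp_le x y : x <= y -> exp x <= exp y.
Proof. intros [lt| ->]; [left; apply exp_increasing|right]; auto. Qed.

(* Taking [M]-th roots of [a^(beta N) <= 2 k^(2d)]: the factor [2] is absorbed by
   [2^(M/beta)] in the base, and [k^(2d/M) <= k] because [2d <= M]. *)
Lemma Rpower_root_bound (a beta k N M : R) (d : nat) :
  0 < a -> 0 < beta -> 1 <= k -> 1 <= N -> 1 <= M -> 2 * INR d <= M ->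
  Rpower a (beta * N) <= 2 * k ^ (2 * d) ->
  Rpower (a / Rpower 2 (M / beta)) (beta * N / M) <= k.
Proof.
  intros ha hbeta hk hN hM hdM hpow.
  assert (ln2 : 0 < ln 2) by (pose proof ln_lt_2; lra).
  assert (lnk : 0 <= ln k) by (rewrite <- ln_1; apply ln_le; lra).
  assert (hlog : beta * N * ln a <= ln 2 + 2 * INR d * ln k).
  { rewrite <- ln_Rpower. eapply Rle_trans; [apply ln_le; [apply exp_pos|exact hpow]|].
    rewrite ln_mult, ln_pow, mult_INR by (try apply pow_lt; lra). simpl INR. lra. }
  unfold Rpower at 1. rewrite <- (exp_ln k) by lra. apply exp_le.
  assert (lnq : ln (a / Rpower 2 (M / beta)) = ln a - M / beta * ln 2).
  { unfold Rdiv at 1. rewrite ln_mult, ln_Rinv, ln_Rpower; [ring|apply exp_pos|exact ha|].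
    apply Rinv_0_lt_compat, exp_pos. }
  rewrite lnq. apply (Rmult_le_reg_l M); [lra|].
  replace (M * (beta * N / M * (ln a - M / beta * ln 2)))
    with (beta * N * ln a - N * M * ln 2) by (field; lra).
  assert (0 <= (M - 2 * INR d) * ln k) by (apply Rmult_le_pos; lra).
  assert (0 <= (N * M - 1) * ln 2) by (apply Rmult_le_pos; nra).
  lra.
Qed.

Lemma le_fact n : (n <= fact n)%nat.
Proof. induction n as [|n IH]; simpl; [lia|]. pose proof (lt_O_fact n). nia. Qed.

Lemma rpow_bound_of_card_bounds (alpha beta : R) (d m n k kU kV kVn : nat) :
  0 < alpha -> 0 < beta -> (1 <= d)%nat -> (2 * d <= m)%nat -> (1 <= n)%nat ->
  (1 <= k)%nat -> (1 <= kU)%nat ->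
  (kU <= d * kV)%nat -> (kVn <= 2 * k ^ (2 * d))%nat ->
  rpow (alpha * INR kV) (beta * INR n) <= INR kVn ->
  rpow (alpha / (Rpower 2 (INR m / beta) * INR d) * INR kU) (beta * INR n / INR m) <= INR k.
Proof.
  intros halpha hbeta hd hm hn hk hkU hUV hVn growth.
  apply le_INR in hd, hm, hn, hk, hkU, hUV, hVn.
  rewrite mult_INR in hm, hUV. rewrite mult_INR, pow_INR in hVn.
  change (INR 1) with 1 in hd, hn, hk, hkU. change (INR 2) with 2 in hm, hVn.
  assert (hkV : 0 < INR kV) by nra.
  rewrite rpow_Rpower in growth by nra.
  replace (alpha / (Rpower 2 (INR m / beta) * INR d) * INR kU)
    with (alpha * INR kU / INR d / Rpower 2 (INR m / beta))
    by (field; split; [lra|apply Rgt_not_eq, exp_pos]).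
  assert (base_pos : 0 < alpha * INR kU / INR d) by (apply Rdiv_lt_0_compat; nra).
  rewrite rpow_Rpower by (apply Rdiv_lt_0_compat; [exact base_pos|apply exp_pos]).
  apply (Rpower_root_bound _ _ _ _ _ d); try lra.
  apply (Rle_trans _ (Rpower (alpha * INR kV) (beta * INR n))); [|lra].
  apply Rle_Rpower_l; [nra|split; [exact base_pos|]].
  apply (Rmult_le_reg_r (INR d)); [lra|]. field_simplify; nra.
Qed.

Theorem proposition2p34
  (G : Type) (mul : G -> G -> G) (one : G) (inv : G -> G)
  (Hgrp : is_group mul one inv)
  (U : G -> Prop) (Ufin : exists k, has_card U k)
  (Usym : symmetric inv U) (Ugen : generates mul one inv U (fun _ => True))
  (H : G -> Prop) (Hsub : is_subgroup mul one inv H)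
  (d : nat) (Hidx : has_index mul one inv H d)
  (alpha beta : R) (Halpha : 0 < alpha) (Hbeta : 0 < beta)
  (HH : forall V : G -> Prop, forall kV : nat,
      has_card V kV -> symmetric inv V -> generates mul one inv V H ->
      forall (n k : nat), has_card (set_pow mul one V n) k ->
        rpow (alpha * INR kV) (beta * INR n) <= INR k) :
  let m := (2 * fact d + 1)%nat in
  forall (kU : nat), has_card U kU ->
  forall (n k : nat), has_card (set_pow mul one U n) k ->
    rpow (alpha / (Rpower 2 (INR m / beta) * INR d) * INR kU)
         (beta * INR n / INR m) <= INR k.
Proof.
  intros m kU hkU n k hk.
  destruct Hidx as [lg [<- [lg_cov _]]].
  assert (hm : (2 * length lg <= m)%nat) by (pose proof (le_fact (length lg)); unfold m; lia).
  destruct n as [|n].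
  { rewrite (has_card_unique _ _ _ hk (card_set_pow0 mul one U)).
    change (INR 0) with 0. rewrite Rmult_0_r, Rdiv_0_l, rpow_0_r. apply Rle_refl. }
  pose proof hkU as [[|u lU] [_ [hlen hU]]].
  - subst kU. change (INR (length [])) with 0. rewrite Rmult_0_r, rpow_0_l; [apply pos_INR|].
    assert (0 < INR m) by (apply lt_0_INR; unfold m; lia).
    assert (0 < INR (S n)) by (apply lt_0_INR; lia).
    apply Rgt_not_eq, Rdiv_lt_0_compat; nra.
  - assert (hu : U u) by (apply hU; left; reflexivity).
    destruct (subgroup_ball_card_bounds mul one inv Hgrp U H lg Usym Hsub lg_cov u kU hu hkU)
      as [kV [hkV [hUV hVn]]].
    destruct (hVn _ k hk) as [kVn [hkVn hbound]].
    pose proof (index_pos mul one inv H lg lg_cov) as hd.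
    pose proof (card_set_pow_mono mul one inv Hgrp U u 0 _ 1 k hu (Nat.le_0_l _)
                  (card_set_pow0 mul one U) hk) as hk1.
    assert (hkU1 : (1 <= kU)%nat) by (subst kU; simpl; lia).
    apply (rpow_bound_of_card_bounds alpha beta (length lg) m (S n) k kU kV kVn
             Halpha Hbeta hd hm ltac:(lia) hk1 hkU1 hUV hbound).
    apply (HH _ kV hkV); [| |exact hkVn].
    + exact (subgroup_ball_symmetric mul one inv Hgrp U H Usym Hsub _).
    + exact (subgroup_ball_generates mul one inv Hgrp U H lg Usym Ugen Hsub lg_cov
               (2 * length lg) ltac:(lia)).
Qed.
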